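(* Let $\varepsilon>0$, let $c=(1+\varepsilon)n$, let $D$ be a positive integer and let $\frac{\log n}{n}\le p\le\frac{2\log n}{n}$. Then with probability $1-o(1)$ the graph $G\sim\mathcal G_c(n,p)$ has the following property: for every $j\le\frac{n}{\log^{0.9}n}$ and every collection of $j$ vertex-disjoint stars in $G$, each with $\log^{0.2}n$ edges, the number of distinct colors appearing on their edges is at least $2Dj$.
   Context: $\mathcal G_c(n,p)$: random graph on $[n]$, each pair an edge independently with probability $p$, each edge colored uniformly and independently from $[c]$. Asymptotics as $n\to\infty$. *)

From HB Require Import structures.
From mathcomp Require Import all_boot all_order all_algebra.
From mathcomp Require Import all_classical all_reals all_analysis.
Set Implicit Arguments. Unset Strict Implicit. Unset Printing Implicit Defensive.
Import Order.TTheory GRing.Theory Num.Theory.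
Local Open Scope ring_scope.

(* Unordered pairs {u,v} of [n] represented as (u,v) with u < v. *)
Definition pairT (n : nat) : finType := {x : 'I_n * 'I_n | (x.1 < x.2)%N}.

(* An outcome of G_c(n,p): for each pair, None = non-edge,
   Some a = edge with color a. *)
Definition config (n c : nat) : finType := {ffun pairT n -> option 'I_c}.

Definition lab (n c : nat) (w : config n c) (u v : 'I_n) : option 'I_c :=
  match (insub (u, v) : option (pairT n)) with
  | Some e => w e
  | None => match (insub (v, u) : option (pairT n)) with
            | Some e => w e
            | None => None
            end
  end.

(* Probability of outcome w: independent edges with prob p,
   independent uniform colors in [c]. *)
Definition weight (R : realType) (n c : nat) (p : R) (w : config n c) : R :=
  \prod_(e : pairT n) (if w e is Some _ then p / c%:R else 1 - p).

Definition prob (R : realType) (n c : nat) (p : R) (E : pred (config n c)) : R :=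
  \sum_(w : config n c | E w) weight p w.

Definition ncolors (R : realType) (eps : R) (n : nat) : nat :=
  Num.truncn ((1 + eps) * n%:R).

Definition star_size (R : realType) (n : nat) : nat :=
  Num.truncn ((ln (n%:R : R)) `^ (5%:R^-1)).

Definition disjoint_stars (n c j k : nat) (w : config n c)
  (ctr : 'I_j -> 'I_n) (lvs : 'I_j -> {set 'I_n}) : Prop :=
  (forall i, #|lvs i| = k) /\
  (forall i, ctr i \notin lvs i) /\
  (forall i l, l \in lvs i -> lab w (ctr i) l != None) /\
  (forall i i', i != i' ->
     [disjoint (ctr i |: lvs i) & (ctr i' |: lvs i')]).

Definition star_colors (n c j : nat) (w : config n c)
  (ctr : 'I_j -> 'I_n) (lvs : 'I_j -> {set 'I_n}) : {set 'I_c} :=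
  [set a | [exists i, exists l in lvs i, lab w (ctr i) l == Some a]].

Definition good_property (R : realType) (D : nat) (n c : nat) (w : config n c) : Prop :=
  forall (j : nat), (j%:R <= (n%:R : R) / (ln (n%:R : R)) `^ (9%:R / 10%:R)) ->
  forall (ctr : 'I_j -> 'I_n) (lvs : 'I_j -> {set 'I_n}),
    @disjoint_stars n c j (star_size R n) w ctr lvs ->
    (2 * D * j <= #|star_colors w ctr lvs|)%N.

Definition probP (R : realType) (n c : nat) (p : R) (E : config n c -> Prop) : R :=
  prob p (fun w => `[< E w >]).

(* A first-moment argument.  If j vertex-disjoint stars with k = floor(log^(1/5) n)
   edges each see fewer than 2Dj colours, then for some set S of at most 2Dj colours
   all jk star edges are present with colours in S, an event of probability at most
   (p |S| / c)^(jk).  There are at most (e c / 2Dj)^(2Dj) such colour sets and at most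
   (e n C(n,k) / j)^j such star families (both counted with the generating-function
   bound (1 + y)^N <= exp(N y)), so the expected number of bad configurations for a
   given j is at most T^j with T = (e c / 2Dj)^(2D) (e n C(n,k) / j) (2Dj p / c)^k.
   Writing u = log^(1/10) n, the constraints j <= n / u^9, n p <= 2 u^10 and
   k >= u^2 / 2 give T = O(1/u); summing the geometric series over j, the failure
   probability is O(1/u), which tends to 0. *)

From mathcomp Require Import all_boot all_order all_algebra.
From mathcomp Require Import all_classical all_reals all_analysis.
From mathcomp Require Import ring lra zify.
Import Order.TTheory GRing.Theory Num.Theory.
Import numFieldNormedType.Exports.
Set Implicit Arguments. Unset Strict Implicit. Unset Printing Implicit Defensive.
Local Open Scope ring_scope.

Lemma ler_sum_subpred (R : numDomainType) (I : finType) (P Q : pred I)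
    (F : I -> R) :
  (forall i, 0 <= F i) -> (forall i, P i -> Q i) ->
  \sum_(i | P i) F i <= \sum_(i | Q i) F i.
Proof.
move=> F_ge0 PQ; rewrite [X in X <= _]big_mkcond [X in _ <= X]big_mkcond.
by apply: ler_sum => i _; case: ifP => [/PQ ->|_] //; case: ifP.
Qed.

Lemma sumr_option (R : nmodType) (T : finType) (F : option T -> R) :
  \sum_(o : option T) F o = F None + \sum_(x : T) F (Some x).
Proof.
rewrite (bigD1 None) //=; congr (_ + _).
rewrite (reindex_omap Some id); last by case.
by apply: eq_bigl => x /=; rewrite eqxx.
Qed.

Section ProductSpace.
Variables (R : realType) (n c : nat) (p : R).

Definition edge_weight (o : option 'I_c) : R :=
  if o is Some _ then p / c%:R else 1 - p.

Lemma weightE (w : config n c) : weight p w = \prod_e edge_weight (w e).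
Proof. by []. Qed.

Hypothesis p01 : 0 <= p <= 1.

Lemma edge_weight_ge0 o : 0 <= edge_weight o.
Proof.
by case/andP: p01 => p0 p1; case: o => [a|] /=; rewrite ?subr_ge0 ?divr_ge0.
Qed.

Lemma weight_ge0 (w : config n c) : 0 <= weight p w.
Proof. by rewrite weightE; apply: prodr_ge0 => e _; exact: edge_weight_ge0. Qed.

Lemma prob_ge0 (P : pred (config n c)) : 0 <= prob p P.
Proof. by apply: sumr_ge0 => w _; exact: weight_ge0. Qed.

Lemma le_prob (P Q : pred (config n c)) :
  (forall w, P w -> Q w) -> prob p P <= prob p Q.
Proof. exact/ler_sum_subpred/weight_ge0. Qed.

Lemma prob_union_bound (I : finType) (P : pred I) (Q : I -> pred (config n c))
    (E : pred (config n c)) :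
  (forall w, E w -> exists2 i, P i & Q i w) ->
  prob p E <= \sum_(i | P i) prob p (Q i).
Proof.
move=> EQ; rewrite /prob (exchange_big_dep predT) //=.
apply: le_trans (_ : \sum_(w | E w) \sum_(i | P i && Q i w) weight p w <= _).
  apply: ler_sum => w Ew; have [i Pi Qiw] := EQ w Ew.
  by rewrite (bigD1 i) ?Pi //= lerDl sumr_ge0 // => *; exact: weight_ge0.
apply: ler_sum_subpred => // w.
by apply: sumr_ge0 => *; exact: weight_ge0.
Qed.

Lemma prob_product (A : pairT n -> pred (option 'I_c)) :
  prob p (fun w : config n c => [forall e, A e (w e)]) =
  \prod_e \sum_(o | A e o) edge_weight o.
Proof.
rewrite (bigA_distr_big_dep _ (fun e o => edge_weight o)) /prob.
by apply: eq_bigl => w; apply/forallP/familyP => H e; exact: H.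
Qed.

Hypothesis c_gt0 : (0 < c)%N.

Lemma sum_edge_weight : \sum_(o : option 'I_c) edge_weight o = 1.
Proof.
rewrite sumr_option /= sumr_const card_ord -[p / _ *+ _]mulr_natr mulfVK ?subrK //.
by rewrite pnatr_eq0 -lt0n.
Qed.

Lemma prob_predT : prob p (@predT (config n c)) = 1.
Proof.
have := @prob_product (fun _ _ => true).
under [in RHS]eq_bigr do rewrite sum_edge_weight.
rewrite big1 // => <-; apply: eq_bigl => w; exact/esym/forallP.
Qed.

Lemma prob_predC (P : pred (config n c)) : prob p P = 1 - prob p (predC P).
Proof. by rewrite -prob_predT /prob [X in _ = X - _](bigID P) /= addrK. Qed.

End ProductSpace.

(* A family of stars is encoded by L with L v = Some A when v is a centre with leaf
   set A, and L v = None when v is not a centre. *)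
Notation star_map n := {ffun 'I_n -> option {set 'I_n}}.

Section Stars.
Variable n : nat.

Definition pair_of (u v : 'I_n) : option (pairT n) :=
  if (insub (u, v) : option (pairT n)) is Some e then Some e
  else insub (v, u).

Lemma lab_pair_of c (w : config n c) (u v : 'I_n) :
  lab w u v = if pair_of u v is Some e then w e else None.
Proof.
by rewrite /lab /pair_of; case: (insub (u, v)) => //; case: (insub (v, u)).
Qed.

Lemma pair_ofP (u v : 'I_n) e :
  pair_of u v = Some e -> val e = (u, v) \/ val e = (v, u).
Proof.
rewrite /pair_of; case: insubP => [e' _ <- [<-]|_]; first by left.
by case: insubP => [e' _ <- [<-]|//]; right.
Qed.

Lemma pair_of_neq (u v : 'I_n) : u != v -> exists e, pair_of u v = Some e.
Proof.
rewrite neq_ltn /pair_of => uv; case: insubP => [e _ _|/negP uv']; first by exists e.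
case: insubP => [e _ _|/negP vu']; first by exists e.
by case/orP: uv.
Qed.

Lemma pair_of_eq (u v u' v' : 'I_n) e :
  pair_of u v = Some e -> pair_of u' v' = Some e ->
  (u', v') = (u, v) \/ (u', v') = (v, u).
Proof.
by move=> /pair_ofP h1 /pair_ofP; case: h1 => -> [] [-> ->]; [left|right|right|left].
Qed.

Definition star_edge (L : star_map n) (v l : 'I_n) : bool :=
  if L v is Some A then l \in A else false.

Definition star_family (k j : nat) (L : star_map n) : bool :=
  [&& #|[set v | L v != None]| == j,
      [forall v, if L v is Some A then (#|A| == k) && (v \notin A) else true] &
      [forall v, forall v', (v != v') ==>
         if (L v, L v') is (Some A, Some A') then [disjoint v |: A & v' |: A']
         else true]].

Definition star_edges (L : star_map n) : {set pairT n} :=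
  [set e | [exists v, exists l, star_edge L v l && (pair_of v l == Some e)]].

Variables (k j : nat) (L : star_map n).
Hypothesis HL : star_family k j L.

Lemma star_edge_neq v l : star_edge L v l -> v != l.
Proof.
case/and3P: HL => _ /forallP/(_ v) + _; rewrite /star_edge.
by case: (L v) => [A|//] /andP[_ vA] lA; apply: contraNneq vA => ->.
Qed.

Lemma star_edge_asym v l : star_edge L v l -> ~~ star_edge L l v.
Proof.
move=> vl; apply/negP => lv; have := star_edge_neq vl.
case/and3P: HL => _ _ /forallP/(_ v)/forallP/(_ l)/implyP H /H.
move: vl lv; rewrite /star_edge; case: (L v) => [A|//]; case: (L l) => [A'|//].
move=> lA vA'; rewrite -setI_eq0 => /eqP/setP/(_ l).
by rewrite !inE lA eqxx orbT.
Qed.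

Lemma card_star_edge_pairs :
  #|[set x : 'I_n * 'I_n | star_edge L x.1 x.2]| = (j * k)%N.
Proof.
case/and3P: HL => /eqP Hj /forallP H _.
rewrite -sum1dep_card -(pair_big_dep xpredT (star_edge L) (fun _ _ => 1%N)) /=.
rewrite (eq_bigr (fun v => if v \in [set v | L v != None] then k else 0%N)).
  by rewrite -big_mkcond sum_nat_const Hj.
move=> v _; rewrite inE; have := H v; rewrite /star_edge.
by case: (L v) => [A /andP[/eqP <- _]|_] /=; [exact: sum1_card | exact: big_pred0_eq].
Qed.

Lemma card_star_edges : (j * k <= #|star_edges L|)%N.
Proof.
rewrite -card_star_edge_pairs.
set P := [set x : 'I_n * 'I_n | star_edge L x.1 x.2].
pose f (x : 'I_n * 'I_n) := pair_of x.1 x.2.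
have f_some x : x \in P -> exists2 e, f x = Some e & e \in star_edges L.
  rewrite inE => Px; have [e fx] := pair_of_neq (star_edge_neq Px).
  exists e; first exact: fx.
  by rewrite inE; apply/existsP; exists x.1; apply/existsP; exists x.2; rewrite Px fx eqxx.
rewrite -(card_in_imset (f := f)); last first.
  move=> [u v] [u' v'] Px Py fxy; have [e fx _] := f_some _ Px.
  have fy : f (u', v') = Some e by rewrite -fxy.
  case: (pair_of_eq fx fy) => /= [] [e1 e2]; first by rewrite e1 e2.
  by move: Px Py; rewrite e1 e2 !inE /= => /star_edge_asym/negP uv /uv.
rewrite -[#|star_edges L|](card_imset _ (@Some_inj _)); apply: subset_leq_card.
by apply/fintype.subsetP => _ /imsetP[x /f_some[e -> He] ->]; apply: imset_f.
Qed.

End Stars.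

Definition colored_in n c (S : {set 'I_c}) (L : star_map n) (w : config n c) : bool :=
  [forall v, forall l,
     star_edge L v l ==> if lab w v l is Some a then a \in S else false].

Lemma prob_colored_in (R : realType) n c (p : R) k j (S : {set 'I_c}) (L : star_map n) :
  0 <= p <= 1 -> (0 < c)%N -> star_family k j L ->
  prob p (colored_in S L) <= (p * #|S|%:R / c%:R) ^+ (j * k).
Proof.
move=> p01 c_gt0 HL; set q := p * #|S|%:R / c%:R.
pose A e (o : option 'I_c) :=
  if e \in star_edges L then (if o is Some a then a \in S else false) else true.
apply: le_trans (le_prob p01 (Q := fun w => [forall e, A e (w e)]) _) _.
  move=> w /forallP Hw; apply/forallP => e; rewrite /A; case: ifP => // /[1!inE].
  case/existsP=> v /existsP[l /andP[vl /eqP vle]].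
  by have /forallP/(_ l) := Hw v; rewrite vl lab_pair_of vle.
have sumA e : \sum_(o | A e o) edge_weight p o = if e \in star_edges L then q else 1.
  rewrite /A; case: ifP => _; last exact: sum_edge_weight.
  rewrite big_mkcond sumr_option /= add0r -big_mkcond /= sumr_const.
  by rewrite -[_ *+ #|_|]mulr_natr mulrAC.
rewrite prob_product; under eq_bigr do rewrite sumA.
rewrite -big_mkcond /= prodr_const; case/andP: p01 => p0 p1.
have q0 : 0 <= q by rewrite divr_ge0 ?mulr_ge0.
have q1 : q <= 1.
  rewrite ler_pdivrMr ?ltr0n // mul1r -[X in _ <= X]mul1r ler_pM // ler_nat.
  by rewrite (leq_trans (max_card _)) ?card_ord.
by apply: ler_wiXn2l => //; exact: card_star_edges HL.
Qed.

Lemma disjoint_stars_family n c k j (w : config n c) (ctr : 'I_j -> 'I_n)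
    (lvs : 'I_j -> {set 'I_n}) :
  disjoint_stars k w ctr lvs ->
  exists2 L : star_map n, star_family k j L & colored_in (star_colors w ctr lvs) L w.
Proof.
case=> card_lvs [ctr_lvs [lvs_edges disj]].
have ctr_inj : injective ctr.
  move=> i i' E; apply/eqP/negPn/negP => /disj.
  by rewrite -setI_eq0 => /eqP/setP/(_ (ctr i)); rewrite !inE E eqxx.
pose L : star_map n :=
  [ffun v => if [pick i | ctr i == v] is Some i then Some (lvs i) else None].
have LP v A : L v = Some A -> exists2 i, ctr i = v & A = lvs i.
  by rewrite /L ffunE; case: pickP => [i /eqP <- [<-]|//]; exists i.
have L_ctr i : L (ctr i) = Some (lvs i).
  rewrite /L ffunE; case: pickP => [i' /eqP /ctr_inj -> //|/(_ i)].
  by rewrite eqxx.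
exists L; [apply/and3P; split |].
- have -> : [set v | L v != None] = ctr @: [set: 'I_j].
    apply/setP => v; rewrite inE; apply/idP/imsetP => [|[i _ ->]]; last by rewrite L_ctr.
    by case E: (L v) => [A|//] _; have [i <- _] := LP _ _ E; exists i.
  by rewrite card_imset // cardsT card_ord.
- apply/forallP => v; case E: (L v) => [A|//]; have [i <- ->] := LP _ _ E.
  by rewrite card_lvs eqxx ctr_lvs.
- apply/forallP => v; apply/forallP => v'; apply/implyP => vv'.
  case E: (L v) => [A|//]; have [i Ev ->] := LP _ _ E.
  case E': (L v') => [A'|//]; have [i' Ev' ->] := LP _ _ E'.
  by rewrite -Ev -Ev'; apply: disj; apply: contraNneq vv' => ii'; rewrite -Ev -Ev' ii'.
- apply/forallP => v; apply/forallP => l; apply/implyP; rewrite /star_edge.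
  case E: (L v) => [A|//]; have [i <- ->] := LP _ _ E => li.
  have := lvs_edges _ _ li; case El: (lab w (ctr i) l) => [a|//] _.
  rewrite inE; apply/existsP; exists i; apply/existsP; exists l.
  by rewrite li El eqxx.
Qed.

Lemma sum_ffun_prod (R : comPzSemiRingType) (I T : finType) (g : T -> R) :
  \sum_(f : {ffun I -> T}) \prod_i g (f i) = (\sum_t g t) ^+ #|I|.
Proof. by rewrite -(bigA_distr_bigA (fun _ => g)) prodr_const. Qed.

Lemma sum_set_exprn (R : comPzSemiRingType) (T : finType) (y : R) :
  \sum_(S : {set T}) y ^+ #|S| = (y + 1) ^+ #|T|.
Proof.
rewrite (reindex (fun f : {ffun T -> bool} => [set x | f x])); last first.
  exists (fun S : {set T} => [ffun x => x \in S]) => [f _|S _].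
    by apply/ffunP => x; rewrite ffunE inE.
  by apply/setP => x; rewrite inE ffunE.
have -> : y + 1 = \sum_(b : bool) (if b then y else 1) by rewrite big_bool.
rewrite -sum_ffun_prod; apply: eq_bigr => f _.
by rewrite -prodr_const big_mkcond; apply: eq_bigr => x _; rewrite inE.
Qed.

Lemma card_le_weight_sum (R : numFieldType) (T : finType) (A : {set T})
    (F : T -> R) (y : R) (m : nat) :
  0 < y -> (forall t, 0 <= F t) -> (forall t, t \in A -> y ^+ m <= F t) ->
  #|A|%:R <= y ^- m * \sum_t F t.
Proof.
move=> y_gt0 F_ge0 PF; have ym_gt0 : 0 < y ^+ m by rewrite exprn_gt0.
rewrite -(ler_pM2l ym_gt0) mulrA divff ?gt_eqF // mul1r.
rewrite -sumr_const mulr_sumr; apply: le_trans (ler_sum_subpred F_ge0 (Q := predT) _) => //.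
by apply: ler_sum => t /PF; rewrite mulr1.
Qed.

Lemma gen_fun_count_le (R : realType) (a x : R) (m N : nat) :
  0 <= a -> 0 < x -> a * x * N%:R = m%:R ->
  x ^- m * (1 + a * x) ^+ N <= (expR 1 / x) ^+ m.
Proof.
move=> a_ge0 x_gt0 axN; rewrite mulrC expr_div_n.
apply: ler_wpM2r; first by rewrite invr_ge0 exprn_ge0 // ltW.
have -> : expR 1 ^+ m = expR (a * x) ^+ N.
  by rewrite -!expRM_natl -axN mulr1 mulrC.
rewrite lerXn2r ?nnegrE ?expR_ge0 ?expR_ge1Dx //.
by rewrite addr_ge0 // mulr_ge0 // ltW.
Qed.

Lemma card_small_sets (R : realType) (T : finType) (s : nat) :
  (0 < s <= #|T|)%N ->
  (#|[set S : {set T} | (#|S| <= s)%N]|%:R : R) <= (expR 1 * #|T|%:R / s%:R) ^+ s.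
Proof.
case/andP=> s_gt0 sT; set t := #|T|.
have t_gt0 : (0 < t)%N by apply: leq_trans sT.
set y : R := s%:R / t%:R.
have y_gt0 : 0 < y by rewrite divr_gt0 ?ltr0n.
have y_le1 : y <= 1 by rewrite ler_pdivrMr ?ltr0n // mul1r ler_nat.
apply: le_trans (card_le_weight_sum (F := fun S : {set T} => y ^+ #|S|) (m := s) y_gt0 _ _) _.
- by move=> S; rewrite exprn_ge0 // ltW.
- by move=> S; rewrite inE => HS; rewrite ler_wiXn2l // ltW.
have := @gen_fun_count_le R 1 y s t ler01 y_gt0.
rewrite mul1r mulfVK ?pnatr_eq0 -?lt0n // addrC sum_set_exprn => /(_ erefl).
by rewrite invf_div mulrA.
Qed.

Lemma card_star_families (R : realType) (n k j : nat) :
  (0 < j)%N -> (k <= n)%N ->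
  (#|[set L : star_map n | star_family k j L]|%:R : R) <=
    (expR 1 * n%:R * 'C(n, k)%:R / j%:R) ^+ j.
Proof.
move=> j_gt0 kn; have [n0|n_gt0] := posnP n.
  suff -> : #|[set L : star_map n | star_family k j L]| = 0%N.
    by rewrite exprn_ge0 // mulr_ge0 // ?divr_ge0 // mulr_ge0 ?expR_ge0.
  apply/eqP; rewrite cards_eq0; apply/eqP/setP => L; rewrite !inE.
  apply/negbTE/negP => /and3P[/eqP j_def _ _].
  by have := max_card [set v | L v != None]; rewrite j_def card_ord n0 leqNgt j_gt0.
set N := 'C(n, k).
have N_gt0 : (0 < N)%N by rewrite bin_gt0.
set y : R := j%:R / (N%:R * n%:R).
have y_gt0 : 0 < y by rewrite divr_gt0 ?mulr_gt0 ?ltr0n.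
pose g (o : option {set 'I_n}) := if o is Some A then (#|A| == k)%:R * y else 1.
have g_ge0 o : 0 <= g o by case: o => [A|] //=; rewrite mulr_ge0 // ltW.
apply: le_trans (card_le_weight_sum (F := fun L : star_map n => \prod_v g (L v))
  (m := j) y_gt0 _ _) _.
- by move=> L; apply: prodr_ge0 => v _.
- move=> L; rewrite inE => /and3P[/eqP <- /forallP HL _]; rewrite -prodr_const big_mkcond le_eqVlt.
  apply/orP; left; apply/eqP/eq_bigr => v _; rewrite inE /g.
  by have := HL v; case: (L v) => [A /andP[/eqP -> _]|_] //=; rewrite eqxx mul1r.
rewrite sum_ffun_prod sumr_option /= card_ord.
rewrite (eq_bigr (fun A => if A \in [set A : {set 'I_n} | #|A| == k] then y else 0)).
  rewrite -big_mkcond sumr_const card_draws card_ord -/N -[y *+ N]mulr_natl.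
  have -> : expR 1 * n%:R * N%:R / j%:R = expR 1 / y.
    by rewrite /y invf_div; field; rewrite pnatr_eq0 -lt0n.
  apply: gen_fun_count_le => //; rewrite /y; field.
  by rewrite !pnatr_eq0 -!lt0n n_gt0 N_gt0.
by move=> A _; rewrite inE; case: eqP; rewrite ?mul1r ?mul0r.
Qed.

Section Estimates.
Variable R : realType.

Lemma natX_self_le_expR_fact (k : nat) :
  (k%:R : R) ^+ k <= expR 1 ^+ k * k`!%:R.
Proof.
case: k => [|k]; first by rewrite !expr0 mul1r.
have := @expR_ge1Dxn R k.+1%:R k (ler0n _ _).
rewrite -expRM_natl mulr1 => H.
have f_gt0 : 0 < k.+1`!%:R :> R by rewrite ltr0n fact_gt0.
by rewrite -ler_pdivrMr //; apply: le_trans H; rewrite lerDr.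
Qed.

Lemma ffact_le_expn (n k : nat) : (n ^_ k <= n ^ k)%N.
Proof.
rewrite ffact_prod; apply: leq_trans (leq_prod (E2 := fun _ => n) _) _ => [i _|].
  exact: leq_subr.
by rewrite big_const_ord iter_muln_1.
Qed.

Lemma bin_mul_exprn_le (n k : nat) (x : R) : 0 <= x ->
  'C(n, k)%:R * x ^+ k <= (expR 1 * n%:R * x / k%:R) ^+ k.
Proof.
move=> x_ge0; have f_gt0 : 0 < k`!%:R :> R by rewrite ltr0n fact_gt0.
have [->|k_gt0] := posnP k; first by rewrite bin0 !expr0 mulr1.
have k_gt0R : 0 < k%:R :> R by rewrite ltr0n.
have bin_le : 'C(n, k)%:R <= n%:R ^+ k / k`!%:R :> R.
  by rewrite ler_pdivlMr // -natrM -natrX ler_nat bin_ffact ffact_le_expn.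
have inv_fact_le : k`!%:R^-1 <= (expR 1 / k%:R) ^+ k :> R.
  rewrite expr_div_n ler_pdivlMr ?exprn_gt0 // mulrC ler_pdivrMr //.
  exact: natX_self_le_expR_fact.
apply: le_trans (ler_wpM2r (exprn_ge0 _ x_ge0) bin_le) _.
have -> : expR 1 * n%:R * x / k%:R = n%:R * x * (expR 1 / k%:R).
  by rewrite mulrCA -!mulrA [x * _]mulrC.
rewrite [X in X <= _]mulrAC -[n%:R ^+ k * x ^+ k]exprMn [X in _ <= X]exprMn.
by apply: ler_wpM2l; first by rewrite exprn_ge0 ?mulr_ge0.
Qed.

Lemma sum_exprn_pos_le (t : R) (m : nat) : 0 <= t <= 2^-1 ->
  \sum_(j < m.+1 | (0 < j)%N) t ^+ j <= 2 * t.
Proof.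
case/andP=> t_ge0 t_le; rewrite big_mkcond big_ord_recl /= add0r.
under eq_bigr do rewrite exprS.
rewrite -mulr_sumr mulrC ler_wpM2r //; set s := \sum_(i < m) t ^+ i.
have s_ge0 : 0 <= s by apply: sumr_ge0 => i _; exact: exprn_ge0.
have : (1 - t) * s = 1 - t ^+ m by rewrite /s -opprB mulNr -subrX1 opprB.
have := exprn_ge0 m t_ge0; nra.
Qed.

Lemma ler_star_term (A B g x y : R) (d m : nat) :
  0 <= A -> 0 <= B -> 0 <= g -> 0 < x <= y ->
  (A / x) ^+ d * (B / x) * (g * x) ^+ (m + d + 1) <=
  (A / y) ^+ d * (B / y) * (g * y) ^+ (m + d + 1).
Proof.
move=> A_ge0 B_ge0 g_ge0 /andP[x_gt0 xy]; have y_gt0 := lt_le_trans x_gt0 xy.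
have shape z : z != 0 ->
    (A / z) ^+ d * (B / z) * (g * z) ^+ (m + d + 1) = A ^+ d * B * g ^+ (m + d + 1) * z ^+ m.
  by move=> z0; rewrite expr_div_n exprMn !exprD expr1; field; rewrite z0 expf_neq0.
rewrite !shape ?gt_eqF //; apply: ler_wpM2l; first by rewrite !mulr_ge0 ?exprn_ge0.
by rewrite lerXn2r // nnegrE ltW.
Qed.

Lemma mulr2_ln_le (x : R) : 1 <= x -> 2 * ln x <= x.
Proof.
move=> x_ge1; have lnx_ge0 := ln_ge0 x_ge1.
have x_sq : expR (ln x / 2) ^+ 2 = x.
  by rewrite -expRM_natl mulrC mulfVK ?pnatr_eq0 // lnK // posrE (lt_le_trans ltr01).
have : (1 + ln x / 2) ^+ 2 <= x.
  rewrite -[X in _ <= X]x_sq lerXn2r ?nnegrE ?expR_ge0 ?expR_ge1Dx //; lra.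
have := sqr_ge0 (1 - ln x / 2); rewrite !expr2; nra.
Qed.
End Estimates.

(* [star_term n c k d j p ^+ j] bounds the expected number of families of j stars
   with k edges whose edges use at most d j colours; see the header. *)
Definition star_term (R : realType) (n c k d j : nat) (p : R) : R :=
  (expR 1 * c%:R / (d * j)%N%:R) ^+ d * (expR 1 * n%:R * 'C(n, k)%:R / j%:R)
  * (p * (d * j)%N%:R / c%:R) ^+ k.

Lemma sum_prob_colored_in_le (R : realType) (n c k d j : nat) (p : R) :
  0 <= p <= 1 -> (0 < d)%N -> (0 < j)%N -> (d * j <= c)%N -> (k <= n)%N ->
  \sum_(S : {set 'I_c} | (#|S| <= d * j)%N)
    \sum_(L : star_map n | star_family k j L) prob p (colored_in S L)
  <= star_term n c k d j p ^+ j.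
Proof.
move=> p01 d_gt0 j_gt0 djc kn; case/andP: (p01) => p_ge0 _.
have dj_gt0 : (0 < d * j)%N by rewrite muln_gt0 d_gt0.
have c_gt0 : (0 < c)%N := leq_trans dj_gt0 djc.
set q := p * (d * j)%N%:R / c%:R.
have q_ge0 : 0 <= q by rewrite divr_ge0 ?mulr_ge0.
apply: le_trans (_ : \sum_(S : {set 'I_c} | (#|S| <= d * j)%N)
    \sum_(L : star_map n | star_family k j L) q ^+ (j * k) <= _).
  apply: ler_sum => S Ss; apply: ler_sum => L HL.
  apply: le_trans (prob_colored_in _ p01 c_gt0 HL) _.
  rewrite lerXn2r ?nnegrE ?divr_ge0 ?mulr_ge0 //.
  by apply: ler_wpM2r; rewrite ?invr_ge0 //; apply: ler_wpM2l; rewrite ?ler_nat.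
have powM3 (X Y Z : R) : (X ^+ d * Y * Z ^+ k) ^+ j = X ^+ (d * j) * Y ^+ j * Z ^+ (j * k).
  by rewrite !exprMn -!exprM [(k * j)%N]mulnC.
rewrite /star_term powM3 -/q !sumr_const -mulrnA -[q ^+ _ *+ _]mulr_natl mulnC natrM.
rewrite (eq_card (B := [set S : {set 'I_c} | (#|S| <= d * j)%N])) => [|S]; last by rewrite inE.
rewrite (eq_card (B := [set L : star_map n | star_family k j L])) => [|L]; last by rewrite inE.
apply: ler_wpM2r; first exact: exprn_ge0.
apply: ler_pM => //.
  by have := card_small_sets R (T := 'I_c) (s := (d * j)%N); rewrite card_ord dj_gt0 djc; apply.
exact: card_star_families.
Qed.

Lemma star_term_ge0 (R : realType) (n c k d j : nat) (p : R) :
  0 <= p -> 0 <= star_term n c k d j p.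
Proof.
move=> p_ge0; have e_ge0 := expR_ge0 (1 : R).
by rewrite !mulr_ge0 ?exprn_ge0 ?divr_ge0 ?mulr_ge0.
Qed.

Lemma star_termE (R : realType) (n c k d j : nat) (p : R) :
  star_term n c k d j p =
  (expR 1 * c%:R / d%:R / j%:R) ^+ d * (expR 1 * n%:R * 'C(n, k)%:R / j%:R)
  * (p * d%:R / c%:R * j%:R) ^+ k.
Proof.
by rewrite /star_term natrM invfM (mulrA _ d%:R^-1) (mulrA p) [p * _ * j%:R / _]mulrAC.
Qed.

Lemma bin_term_le (R : realType) (n k d : nat) (x u : R) :
  0 <= x -> 0 < u -> (0 < k)%N -> n%:R * x <= 2 * d%:R * u -> u ^+ 2 <= 2 * k%:R ->
  'C(n, k)%:R * x ^+ k <= (4 * expR 1 * d%:R / u) ^+ k.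
Proof.
move=> x_ge0 u_gt0 k_gt0 nx_le u2k; set e := expR 1.
have e_gt0 : 0 < e := expR_gt0 1.
have k_gt0R : 0 < k%:R :> R by rewrite ltr0n.
apply: le_trans (bin_mul_exprn_le n k x_ge0) _.
apply: lerXn2r; rewrite ?nnegrE.
- exact: divr_ge0 (mulr_ge0 (mulr_ge0 (ltW e_gt0) (ler0n _ _)) x_ge0) (ler0n _ _).
- by rewrite divr_ge0 ?mulr_ge0 ?(ltW u_gt0) ?(ltW e_gt0).
apply: le_trans (_ : e * (2 * d%:R * u) / k%:R <= _).
  by rewrite ler_pM2r ?invr_gt0 // -mulrA ler_pM2l.
have -> : 4 * e * d%:R / u = e * (2 * d%:R * u) / k%:R * (2 * k%:R / u ^+ 2).
  by field; rewrite !gt_eqF.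
rewrite -[X in X <= _]mulr1; apply: ler_wpM2l.
  by rewrite divr_ge0 ?mulr_ge0 ?(ltW e_gt0) ?(ltW u_gt0).
by rewrite ler_pdivlMr ?exprn_gt0 // mul1r.
Qed.

Lemma star_term_le_max (R : realType) (n c k d j : nat) (p J : R) :
  (0 < j)%N -> (d < k)%N -> 0 <= p -> j%:R <= J ->
  star_term n c k d j p <=
  (expR 1 * c%:R / d%:R / J) ^+ d * (expR 1 * n%:R * 'C(n, k)%:R / J)
  * (p * d%:R / c%:R * J) ^+ k.
Proof.
move=> j_gt0 dk p_ge0 jJ; have e_ge0 := expR_ge0 (1 : R).
have -> : k = ((k - d.+1) + d + 1)%N by move: dk; clear; lia.
by rewrite star_termE; apply: ler_star_term; rewrite ?ltr0n ?j_gt0 ?divr_ge0 ?mulr_ge0.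
Qed.

Lemma ler_star_product (R : realType) (x y z u v t : R) (d k : nat) :
  0 <= v -> 0 <= t -> 0 <= y -> 0 <= z -> 0 < u -> z / u <= 1 -> (9 * d + 10 <= k)%N ->
  v <= x * u ^+ 9 -> t <= (z / u) ^+ k ->
  v ^+ d * (y * u ^+ 9 * t) <= y * x ^+ d * z ^+ (9 * d + 10) / u.
Proof.
move=> v_ge0 t_ge0 y_ge0 z_ge0 u_gt0 zu_le1 dk vx tz.
have zu_ge0 : 0 <= z / u by rewrite divr_ge0 // ltW.
apply: le_trans (_ : (x * u ^+ 9) ^+ d * (y * u ^+ 9 * (z / u) ^+ (9 * d + 10)) <= _).
  apply: ler_pM; rewrite ?exprn_ge0 ?mulr_ge0 ?(ltW u_gt0) //.
    by apply: lerXn2r; rewrite ?nnegrE // (le_trans v_ge0 vx).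
  apply: ler_wpM2l; first by rewrite mulr_ge0 ?exprn_ge0 // ltW.
  by apply: le_trans tz _; apply: ler_wiXn2l; rewrite ?zu_ge0.
rewrite exprMn -exprM expr_div_n [u ^+ (9 * d + 10)]exprD le_eqVlt; apply/orP; left.
by apply/eqP; field; rewrite gt_eqF ?expf_neq0 ?gt_eqF.
Qed.

Definition star_const (R : realType) (eps : R) (d : nat) : R :=
  expR 1 * (expR 1 * (1 + eps) / d%:R) ^+ d * (4 * expR 1 * d%:R) ^+ (9 * d + 10).

Lemma star_const_ge0 (R : realType) (eps : R) (d : nat) : 0 <= eps -> 0 <= star_const eps d.
Proof.
move=> eps_ge0; have e_ge0 := expR_ge0 (1 : R).
by rewrite /star_const !mulr_ge0 ?exprn_ge0 ?divr_ge0 ?mulr_ge0 ?addr_ge0.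
Qed.

Lemma star_term_le (R : realType) (n c k d j : nat) (p u eps : R) :
  (0 < j)%N -> (0 < d)%N -> (0 < n)%N -> (9 * d + 10 <= k)%N ->
  n%:R <= c%:R :> R -> c%:R <= (1 + eps) * n%:R -> 0 <= p -> n%:R * p <= 2 * u ^+ 10 ->
  j%:R * u ^+ 9 <= n%:R -> u ^+ 2 <= 2 * k%:R -> 4 * expR 1 * d%:R <= u ->
  star_term n c k d j p <= star_const eps d / u.
Proof.
move=> j_gt0 d_gt0 n_gt0 dk nc ceps p_ge0 np_le ju9 u2k du.
have [n_gt0R d_gt0R] : 0 < n%:R :> R /\ 0 < d%:R :> R by rewrite !ltr0n.
have c_gt0R : 0 < c%:R :> R := lt_le_trans n_gt0R nc.
have u_gt0 : 0 < u by apply: lt_le_trans du; rewrite !mulr_gt0 ?expR_gt0.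
have u9_gt0 : 0 < u ^+ 9 := exprn_gt0 9 u_gt0.
set J := n%:R / u ^+ 9; have J_gt0 : 0 < J by rewrite divr_gt0.
have dk' : (d < k)%N by move: dk; clear; lia.
have jJ : j%:R <= J by rewrite /J ler_pdivlMr.
apply: le_trans (star_term_le_max n c j_gt0 dk' p_ge0 jJ) _.
rewrite /star_const; set e := expR 1; have e_gt0 : 0 < e := expR_gt0 1.
set A := e * c%:R / d%:R; set g := p * d%:R / c%:R; set X := g * J.
set a := e * (1 + eps) / d%:R; set b := 4 * e * d%:R.
have A_ge0 : 0 <= A by rewrite divr_ge0 ?mulr_ge0 // ltW.
have g_ge0 : 0 <= g by rewrite divr_ge0 ?mulr_ge0 // ltW.
have X_ge0 : 0 <= X := mulr_ge0 g_ge0 (ltW J_gt0).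
have AJ_le : A / J <= a * u ^+ 9.
  have -> : A / J = e / d%:R * u ^+ 9 / n%:R * c%:R.
    by rewrite /A /J; field; rewrite !gt_eqF.
  have -> : a * u ^+ 9 = e / d%:R * u ^+ 9 / n%:R * ((1 + eps) * n%:R).
    by rewrite /a; field; rewrite !gt_eqF.
  by apply: ler_wpM2l; rewrite // divr_ge0 ?mulr_ge0 ?divr_ge0 // ltW.
have nX_le : n%:R * X <= 2 * d%:R * u.
  have -> : n%:R * X = n%:R * p * (n%:R / c%:R) * d%:R / u ^+ 9.
    by rewrite /X /g /J; field; rewrite !gt_eqF.
  have -> : 2 * d%:R * u = 2 * u ^+ 10 * 1 * d%:R / u ^+ 9.
    by rewrite exprSr; field; rewrite gt_eqF.
  rewrite ler_pM2r ?invr_gt0 // ler_pM2r //.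
  apply: ler_pM; rewrite ?mulr_ge0 ?divr_ge0 ?ler0n //.
  by rewrite ler_pdivrMr // mul1r.
have k_gt0 : (0 < k)%N by rewrite (leq_trans _ dk) // addn_gt0 orbT.
have NX_le := bin_term_le X_ge0 u_gt0 k_gt0 nX_le u2k; rewrite -/e -/b in NX_le.
have -> : (A / J) ^+ d * (e * n%:R * 'C(n, k)%:R / J) * X ^+ k =
    (A / J) ^+ d * (e * u ^+ 9 * ('C(n, k)%:R * X ^+ k)).
  by rewrite /J; field; rewrite !gt_eqF.
apply: (ler_star_product (k := k)) => //.
- by rewrite divr_ge0 // ltW.
- by rewrite mulr_ge0 ?exprn_ge0.
- exact: ltW.
- by rewrite !mulr_ge0 // ltW.
- by rewrite ler_pdivrMr // mul1r.
Qed.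

Lemma prob_not_good_le (R : realType) (eps : R) (D n : nat) (p tau : R) :
  0 <= p <= 1 -> (0 < D)%N -> (star_size R n <= n)%N -> 0 <= tau <= 2^-1 ->
  (forall j, (0 < j)%N -> j%:R <= n%:R / ln (n%:R : R) `^ (9%:R / 10%:R) ->
     (2 * D * j <= ncolors eps n)%N /\
     star_term n (ncolors eps n) (star_size R n) (2 * D) j p <= tau) ->
  prob p (predC (fun w : config n (ncolors eps n) => `[< good_property R D w >]))
    <= 2 * tau.
Proof.
move=> p01 D_gt0 kn tau01 Hj; set c := ncolors eps n; set k := star_size R n.
set J := n%:R / ln (n%:R : R) `^ (9%:R / 10%:R).
pose P1 (j : 'I_n.+1) := (0 < j)%N && (j%:R <= J).
pose P2 (j : 'I_n.+1) (y : {set 'I_c} * star_map n) :=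
  (#|y.1| <= 2 * D * j)%N && star_family k j y.2.
apply: le_trans (prob_union_bound p01 (P := fun x => P1 x.1 && P2 x.1 x.2)
  (Q := fun x => colored_in x.2.1 x.2.2) _) _.
  move=> w /asboolPn bad; apply: contrapT => none; apply: bad => j jJ ctr lvs stars.
  rewrite leqNgt; apply/negP => few.
  have [L HL col] := disjoint_stars_family stars.
  have jn : (j < n.+1)%N.
    case/and3P: HL => /eqP <- _ _; rewrite ltnS (leq_trans (max_card _)) //.
    by rewrite card_ord.
  have j_gt0 : (0 < j)%N.
    by move: (leq_ltn_trans (leq0n _) few); rewrite muln_gt0 => /andP[].
  apply: none; exists (Ordinal jn, (star_colors w ctr lvs, L)) => //.
  by rewrite /P1 /P2 /= j_gt0 jJ HL (ltnW few).
rewrite -(pair_big_dep P1 P2 (fun j y => prob p (colored_in y.1 y.2))) /=.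
apply: le_trans (_ : \sum_(j | P1 j) tau ^+ j <= _); last first.
  apply: le_trans (sum_exprn_pos_le n tau01).
  apply: ler_sum_subpred => [j|j /andP[] //].
  by case/andP: tau01 => tau_ge0 _; exact: exprn_ge0.
apply: ler_sum => j /andP[j_gt0 jJ]; have [djc Tj] := Hj j j_gt0 jJ.
rewrite -(pair_big_dep (fun S : {set 'I_c} => (#|S| <= 2 * D * j)%N)
  (fun _ L => star_family k j L) (fun S L => prob p (colored_in S L))) /=.
have d_gt0 : (0 < 2 * D)%N by rewrite muln_gt0 D_gt0.
apply: le_trans (sum_prob_colored_in_le p01 d_gt0 j_gt0 djc kn) _.
case/andP: p01 tau01 => p_ge0 _ /andP[tau_ge0 _].
by apply: lerXn2r; rewrite ?nnegrE ?star_term_ge0.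
Qed.

Section Asymptotics.
Variable R : realType.

Definition root_ln (n : nat) : R := ln (n%:R : R) `^ 10%:R^-1.

Lemma root_lnX (n m : nat) : root_ln n ^+ m = ln (n%:R : R) `^ (m%:R / 10%:R).
Proof. by rewrite /root_ln -powR_mulrn ?powR_ge0 // -powRrM mulrC. Qed.

Lemma root_lnX10 (n : nat) : (0 < n)%N -> root_ln n ^+ 10 = ln (n%:R : R).
Proof.
move=> n_gt0; rewrite root_lnX divff ?pnatr_eq0 // powRr1 // ln_ge0 //.
by rewrite ler1n.
Qed.

Lemma star_sizeE (n : nat) : star_size R n = Num.truncn (root_ln n ^+ 2).
Proof.
rewrite /star_size root_lnX; congr (Num.truncn (_ `^ _)).
by rewrite -[2%:R]/(2 : R); field.
Qed.

Lemma ncolors_ge (eps : R) (n : nat) : 0 <= eps -> (n <= ncolors eps n)%N.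
Proof.
move=> eps_ge0; rewrite /ncolors truncn_ge_nat ?mulr_ge0 ?addr_ge0 //.
by rewrite -[X in X <= _]mul1r ler_wpM2r // lerDl.
Qed.

Lemma ncolors_le (eps : R) (n : nat) : 0 <= eps -> (ncolors eps n)%:R <= (1 + eps) * n%:R.
Proof.
move=> eps_ge0; rewrite /ncolors.
by case/andP: (truncn_itv (mulr_ge0 (addr_ge0 ler01 eps_ge0) (ler0n R n))).
Qed.

Lemma p_range_01 (n : nat) (p : R) : (0 < n)%N ->
  ln (n%:R : R) / n%:R <= p <= 2 * ln (n%:R : R) / n%:R -> 0 <= p <= 1.
Proof.
move=> n_gt0 /andP[p_ge p_le]; have n_ge1 : 1 <= n%:R :> R by rewrite ler1n.
have n_gt0R : 0 < n%:R :> R by rewrite ltr0n.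
rewrite (le_trans _ p_ge) ?divr_ge0 ?ln_ge0 ?(ltW n_gt0R) //=.
by apply: le_trans p_le _; rewrite ler_pdivrMr // mul1r mulr2_ln_le.
Qed.

Lemma star_size_bounds (n m : nat) : (0 < n)%N -> (0 < m)%N -> m%:R <= root_ln n ->
  [/\ (m <= star_size R n)%N, root_ln n ^+ 2 <= 2 * (star_size R n)%:R
     & (star_size R n <= n)%N].
Proof.
move=> n_gt0 m_gt0 m_le_u; set u := root_ln n; set k := star_size R n.
have u_ge1 : 1 <= u by apply: le_trans m_le_u; rewrite ler1n.
have u_ge0 : 0 <= u := le_trans ler01 u_ge1.
have u_le_u2 : u <= u ^+ 2 by rewrite expr2 ler_peMr.
have /andP[k_le u2_lt] := truncn_itv (exprn_ge0 2 u_ge0).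
rewrite -star_sizeE -/k in k_le u2_lt.
have m_le_k : (m <= k)%N.
  by rewrite /k star_sizeE truncn_ge_nat ?exprn_ge0 // (le_trans m_le_u).
split=> //.
  have : 1 <= k%:R :> R by rewrite ler1n (leq_trans m_gt0).
  by move: u2_lt; rewrite -natr1; lra.
have n_ge1 : 1 <= n%:R :> R by rewrite ler1n.
have := mulr2_ln_le n_ge1; have := ln_ge0 n_ge1; rewrite -root_lnX10 // -/u => ? ?.
rewrite -(ler_nat R); apply: le_trans k_le _; apply: le_trans (_ : u ^+ 10 <= _).
  exact: ler_weXn2l.
lra.
Qed.

Definition star_threshold (eps : R) (D : nat) : R :=
  4 * expR 1 * (2 * D)%N%:R + (9 * (2 * D) + 10)%N%:R + 2 * star_const eps (2 * D).

Lemma star_threshold_le (eps u : R) (D : nat) : 0 <= eps -> star_threshold eps D <= u ->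
  [/\ 4 * expR 1 * (2 * D)%N%:R <= u, (9 * (2 * D) + 10)%N%:R <= u
    & 2 * star_const eps (2 * D) <= u].
Proof.
move=> eps_ge0; rewrite /star_threshold.
have := star_const_ge0 (2 * D) eps_ge0; have := ler0n R (9 * (2 * D) + 10).
have : 0 <= 4 * expR 1 * (2 * D)%N%:R :> R by rewrite !mulr_ge0 ?expR_ge0.
by move=> *; split; lra.
Qed.

Lemma prob_not_good_root_ln (eps : R) (D n : nat) (p : R) :
  0 < eps -> (0 < D)%N -> (0 < n)%N ->
  ln (n%:R : R) / n%:R <= p <= 2 * ln (n%:R : R) / n%:R ->
  star_threshold eps D <= root_ln n ->
  prob p (predC (fun w : config n (ncolors eps n) => `[< good_property R D w >]))
    <= 2 * (star_const eps (2 * D) / root_ln n).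
Proof.
move=> eps_gt0 D_gt0 n_gt0 p_range /(star_threshold_le (ltW eps_gt0)).
have /andP[p_ge0 p_le1] := p_range_01 n_gt0 p_range; case/andP: p_range => _ p_le.
set u := root_ln n; set d := (2 * D)%N; set K := star_const eps d.
set k := star_size R n; set c := ncolors eps n.
case=> ed_le_u dk_le_u K_le_u.
have d_gt0 : (0 < d)%N by rewrite muln_gt0 D_gt0.
have [dk u2k kn] := star_size_bounds n_gt0 (ltn_addl (9 * d) (isT : 0 < 10)%N) dk_le_u.
have u_ge1 : 1 <= u by apply: le_trans dk_le_u; rewrite ler1n addn_gt0 orbT.
have u_gt0 : 0 < u := lt_le_trans ltr01 u_ge1.
have n_gt0R : 0 < n%:R :> R by rewrite ltr0n.
have np_le : n%:R * p <= 2 * u ^+ 10.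
  by rewrite root_lnX10 // mulrC -ler_pdivlMr // mulrAC.
have nc : n%:R <= c%:R :> R by rewrite ler_nat ncolors_ge // ltW.
have ceps : c%:R <= (1 + eps) * n%:R := ncolors_le n (ltW eps_gt0).
have d_le_u9 : d%:R <= u ^+ 9.
  apply: le_trans (_ : u <= _); last by rewrite -[X in X <= _]expr1 ler_weXn2l.
  apply: le_trans ed_le_u; rewrite ler_peMl ?ler0n //.
  by have := expR_ge1Dx (1 : R); lra.
apply: prob_not_good_le => //; first by rewrite p_ge0 p_le1.
  by rewrite divr_ge0 ?(ltW u_gt0) ?star_const_ge0 ?(ltW eps_gt0) //= ler_pdivrMr //; lra.
move=> j j_gt0; rewrite -(root_lnX n 9) -/u ler_pdivlMr ?exprn_gt0 // => ju9; split.
  rewrite -(ler_nat R) natrM; apply: le_trans nc; apply: le_trans ju9.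
  by rewrite mulrC ler_wpM2l.
exact: star_term_le j_gt0 d_gt0 n_gt0 dk nc ceps p_ge0 np_le ju9 u2k ed_le_u.
Qed.
End Asymptotics.

Lemma root_ln_ge (R : realType) (x : R) :
  exists N, forall n, (N <= n)%N -> x <= root_ln R n.
Proof.
exists (Num.truncn (expR (`|x| ^+ 10))).+1 => n n_ge.
have n_gt0 : (0 < n)%N by apply: leq_trans n_ge.
have /andP[_ lt_trunc] := truncn_itv (expR_ge0 (`|x| ^+ 10)).
have lt_n : expR (`|x| ^+ 10) < n%:R.
  by apply: lt_le_trans lt_trunc _; rewrite ler_nat.
apply: le_trans (ler_norm x) _.
rewrite -(ler_pXn2r (n := 10)) ?nnegrE ?powR_ge0 // root_lnX10 //.
have n_gt0R : 0 < n%:R :> R by rewrite ltr0n.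
by rewrite -[X in X <= _]expRK ler_ln ?posrE ?expR_gt0 // ltW.
Qed.

Unset Implicit Arguments.
Local Open Scope classical_set_scope.

Theorem lemma6 (R : realType) (eps : R) (D : nat) (p : nat -> R) :
  0 < eps -> (0 < D)%N ->
  (exists N : nat, forall n : nat, (N <= n)%N ->
     ln (n%:R : R) / n%:R <= p n <= 2 * ln (n%:R : R) / n%:R) ->
  (fun n => probP (p n) (fun w : config n (ncolors eps n) => good_property R D w))
    @ \oo --> (1 : R).
Proof.
move=> eps_gt0 D_gt0 [N0 p_range]; apply/cvgrPdist_le => delta delta_gt0.
set K := star_const eps (2 * D).
have [N1 root_large] :=
  root_ln_ge (Num.max 1 (Num.max (star_threshold eps D) (2 * K / delta))).
exists (maxn N0 N1).+1 => // n /= n_ge.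
have n_gt0 : (0 < n)%N := leq_ltn_trans (leq0n _) n_ge.
move/ltnW: n_ge; rewrite geq_max => /andP[n_N0 n_N1].
have := root_large n n_N1; rewrite !ge_max => /and3P[u_ge1 u_ge_threshold u_ge].
have c_gt0 : (0 < ncolors eps n)%N := leq_trans n_gt0 (ncolors_ge n (ltW eps_gt0)).
have p01 := p_range_01 n_gt0 (p_range n n_N0).
rewrite /probP (prob_predC _ c_gt0) opprB addrC subrK ger0_norm ?prob_ge0 //.
apply: le_trans (prob_not_good_root_ln eps_gt0 D_gt0 n_gt0 (p_range n n_N0) u_ge_threshold) _.
have u_gt0 : 0 < root_ln R n := lt_le_trans ltr01 u_ge1.
by rewrite mulrA ler_pdivrMr // [delta * _]mulrC -ler_pdivrMr.
Qed.
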